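(* Let $\mathcal{X}$ be a tape category with generating object $X$, and let $T$ be a finite-state deterministic transducer with input category $\mathcal{X}$, structure functor $F$, primary input signature $X\to X$ and (output) state space $S(F(X))$, and no auxiliary inputs or output signatures. Fix a finite set of morphisms $g_1,\dots,g_n:X\to X$ in the freely-generated $\mathbb{N}^2$-filtered category over $\mathcal{X}$ with a single generating signature $X\to X$ of degree $x$, such that the generator appears at most once in each $g_i$ (i.e. the linear coefficient of $\deg g_i$ is at most $1$). Suppose a morphism $g:X\to X$ is constructed by starting with $g=\mathrm{id}_X$ and performing finitely many steps, each of which replaces $g$ by some $g_i$ with $g$ substituted for the generator. Then, for a given starting state, the state $S(F(g))$ reached can be computed, processing the construction steps one at a time, using an amount of memory that is $O(1)$ in the degree of $g$.
   Context: A filtered-morphism category is a locally small symmetric monoidal (copy-discard) category in which every morphism $f$ has a degree $\deg(f)\in\mathbb{N}$, identities have degree $0$, and $\deg(g\circ f)\le\deg(g)+\deg(f)$. A tape category is a filtered-morphism copy-discard category freely generated over a single object $X$ and finitely many morphisms of the form $X^m\to X^n$ (superscripts denote monoidal powers), each generator having positive degree. Given a filtered-morphism category $\mathcal{C}$ and a signature $X\to X$ of degree $x$, the freely-generated $\mathbb{N}^2$-filtered category over $\mathcal{C}$ with that generator consists of morphisms built by composing/tensoring $\mathcal{C}$-morphisms with a free generator $X\to X$, with degree a linear polynomial whose linear coefficient counts occurrences of the generator and whose constant term is the sum of degrees of the $\mathcal{C}$-parts. The filtered state category $\mathcal{D}^S$ of a filtered-morphism category $\mathcal{D}$: objects $A$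 are sets $S(A)$ with, for each state, a finite list of variables (pairs of $\mathcal{D}$-objects with degrees $ax+b$); a morphism $f:A\to B$ is a function $S(f):S(A)\to S(B)$ with output functions assigning to each variable at $S(f)(s)$ a morphism in the free category over $\mathcal{D}$ generated by the variables at $s$, with degree constraints; the monoidal product multiplies state spaces and concatenates variable lists. A filtered deterministic transducer with input category $\mathcal{C}$, output category $\mathcal{D}$ and primary input signature $X\to Y$ has a strong monoidal functor $F:\mathcal{C}\to\mathcal{D}^S$ with $\deg F(\alpha)\le\deg\alpha$; on primary input $\alpha$ and input state $s\in S(F(X))$ it moves to the state $S(F(\alpha))(s)$. It is a finite-state deterministic transducer if $S(F(Z))$ is finite for every object $Z$ of the input category. *)

From mathcomp Require Import all_boot.
Set Implicit Arguments. Unset Strict Implicit. Unset Printing Implicit Defensive.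

(* Tape category: the free copy-discard category over one object X and a  *)
(* finite signature of generators X^m -> X^n (objects = nat, m = X^m).     *)
(* Morphisms are represented by (raw) terms; the SMC / comonoid equations  *)
(* are never needed below because every functor we use is defined by      *)
(* structural recursion and respects them.                                *)
Record Sig := { gen : finType; gdom : gen -> nat; gcod : gen -> nat;
                gdeg : gen -> nat }.

Inductive tm (S : Sig) : nat -> nat -> Type :=
| t_id   (a : nat) : tm S a a
| t_comp (a b c : nat) : tm S b c -> tm S a b -> tm S a c
| t_tens (a b c d : nat) : tm S a b -> tm S c d -> tm S (a + c) (b + d)
| t_swap (a b : nat) : tm S (a + b) (b + a)
| t_copy : tm S 1 2
| t_del  : tm S 1 0
| t_gen  (x : gen S) : tm S (gdom x) (gcod x).

Fixpoint tdeg S a b (t : tm S a b) : nat :=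
  match t with
  | t_comp _ _ _ f g => tdeg f + tdeg g
  | t_tens _ _ _ _ f g => tdeg f + tdeg g
  | t_gen x => gdeg x
  | _ => 0
  end.

(* Freely generated N^2-filtered category over the tape category with a   *)
(* single extra generator (the "hole") X -> X of degree x.                 *)
Inductive ctx (S : Sig) : nat -> nat -> Type :=
| c_base (a b : nat) : tm S a b -> ctx S a b
| c_hole : ctx S 1 1
| c_comp (a b c : nat) : ctx S b c -> ctx S a b -> ctx S a c
| c_tens (a b c d : nat) : ctx S a b -> ctx S c d -> ctx S (a + c) (b + d).

(* degree  (coefficient of x, constant term) : deg = holes * x + base *)
Fixpoint cdeg S a b (c : ctx S a b) : nat * nat :=
  match c with
  | c_base _ _ t => (0, tdeg t)
  | c_hole => (1, 0)
  | c_comp _ _ _ f g => ((cdeg f).1 + (cdeg g).1, (cdeg f).2 + (cdeg g).2)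
  | c_tens _ _ _ _ f g => ((cdeg f).1 + (cdeg g).1, (cdeg f).2 + (cdeg g).2)
  end.

Fixpoint fill S a b (c : ctx S a b) (g : tm S 1 1) : tm S a b :=
  match c in ctx _ a b return tm S a b with
  | c_base _ _ t => t
  | c_hole => g
  | c_comp _ _ _ f h => t_comp (fill f g) (fill h g)
  | c_tens _ _ _ _ f h => t_tens (fill f g) (fill h g)
  end.

Definition build S n (gs : 'I_n -> ctx S 1 1) (w : seq 'I_n) : tm S 1 1 :=
  foldl (fun g i => fill (gs i) g) (t_id S 1) w.

(* State part of a finite-state deterministic transducer F : X -> D^S.    *)
(* S(F(-)) is a symmetric strong monoidal functor into (Set, x); by strong *)
(* monoidality S(F(X^m)) = S(F(X))^m (as 'I_m -> S0), S(F(I)) = unit, and  *)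
(* the counit laws force F(copy) to act as the diagonal on states.  Being  *)
(* a functor out of a free category it is determined by its action on the *)
(* generators.  Finite-state: S0 = S(F(X)) is finite.                      *)
Record fs_transducer (S : Sig) := {
  st : finType;
  st_gen : forall x : gen S, ('I_(gdom x) -> st) -> ('I_(gcod x) -> st)
}.

Fixpoint st_map (S : Sig) (T : fs_transducer S) (a b : nat) (t : tm S a b)
  : ('I_a -> st T) -> ('I_b -> st T) :=
  match t in tm _ a b return ('I_a -> st T) -> ('I_b -> st T) with
  | t_id _ => fun v => v
  | t_comp _ _ _ f g => fun v => @st_map S T _ _ f (@st_map S T _ _ g v)
  | t_tens a b c d f g => fun v j =>
      match split j with
      | inl j1 => @st_map S T _ _ f (fun i => v (lshift c i)) j1
      | inr j2 => @st_map S T _ _ g (fun i => v (rshift a i)) j2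
      end
  | t_swap a b => fun v j =>
      match split j with
      | inl j1 => v (rshift a j1)
      | inr j2 => v (lshift b j2)
      end
  | t_copy => fun v _ => v ord0
  | t_del => fun v _ => v ord0   (* domain 'I_0 : vacuous *)
  | t_gen x => @st_gen S T x
  end.
Arguments st_map {S} T {a b} t.

Definition state_after (S : Sig) (T : fs_transducer S) (g : tm S 1 1) (s : st T) : st T :=
  @st_map S T _ _ g (fun _ => s) ord0.
Arguments state_after {S} T g s.

From mathcomp Require Import all_boot.
From Stdlib Require Import FunctionalExtensionality.

(* Since S(F(-)) is a functor, the state map of g_i[g] depends on g only
   through the state map of g, a function S(F(X)) -> S(F(X)).  There are
   finitely many such functions, so memory holding the current one together
   with the starting state suffices. *)

Lemma foldl_pair_const {A B I : Type} (h : A -> I -> A) (a : A) (b : B)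
    (w : seq I) :
  foldl (fun m i => (h m.1 i, m.2)) (a, b) w = (foldl h a w, b).
Proof. by elim: w a => //= i w IHw a; rewrite IHw. Qed.

Section ContextStates.

Variables (S : Sig) (T : fs_transducer S).

Fixpoint ctx_st_map (h : ('I_1 -> st T) -> 'I_1 -> st T) {a b : nat}
    (c : ctx S a b) : ('I_a -> st T) -> 'I_b -> st T :=
  match c in ctx _ a b return ('I_a -> st T) -> 'I_b -> st T with
  | c_base _ _ t => st_map T t
  | c_hole => h
  | c_comp _ _ _ f g => fun v => ctx_st_map h f (ctx_st_map h g v)
  | c_tens a _ c _ f g => fun v j =>
      match split j with
      | inl j1 => ctx_st_map h f (fun i => v (lshift c i)) j1
      | inr j2 => ctx_st_map h g (fun i => v (rshift a i)) j2
      end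
  end.

Lemma st_map_fill (g : tm S 1 1) (a b : nat) (c : ctx S a b) :
  st_map T (fill c g) = ctx_st_map (st_map T g) c.
Proof. by elim: c => //= [a0 b0 c0 f -> h ->|a0 b0 c0 d0 f -> h ->]. Qed.

Definition state_fun (g : tm S 1 1) : {ffun st T -> st T} :=
  [ffun s => state_after T g s].

Definition lift_state1 (f : st T -> st T) (v : 'I_1 -> st T) : 'I_1 -> st T :=
  fun=> f (v ord0).

Lemma st_map_state_fun (g : tm S 1 1) :
  st_map T g = lift_state1 (state_fun g).
Proof.
apply: functional_extensionality => v; apply: functional_extensionality => j.
rewrite /lift_state1 ffunE /state_after [j]ord1.
by congr (st_map T g _ _); apply: functional_extensionality => k; rewrite [k]ord1.
Qed.

Definition fill_state_fun (c : ctx S 1 1) (f : {ffun st T -> st T}) :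
  {ffun st T -> st T} :=
  [ffun s => ctx_st_map (lift_state1 f) c (fun=> s) ord0].

Lemma state_fun_fill (c : ctx S 1 1) (g : tm S 1 1) :
  state_fun (fill c g) = fill_state_fun c (state_fun g).
Proof.
by apply/ffunP => s; rewrite !ffunE /state_after st_map_fill st_map_state_fun.
Qed.

Lemma state_fun_foldl_fill (n : nat) (gs : 'I_n -> ctx S 1 1)
    (g : tm S 1 1) (w : seq 'I_n) :
  foldl (fun f i => fill_state_fun (gs i) f) (state_fun g) w
  = state_fun (foldl (fun g i => fill (gs i) g) g w).
Proof. by elim: w g => //= i w IHw g; rewrite -state_fun_fill IHw. Qed.

End ContextStates.

Arguments state_fun {S} T g.
Arguments fill_state_fun {S T} c f.

Theorem lemma3p19 (S : Sig) (Hpos : forall x : gen S, 0 < gdeg x)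
  (T : fs_transducer S) (n : nat) (gs : 'I_n -> ctx S 1 1)
  (Hgs : forall i : 'I_n, (cdeg (gs i)).1 <= 1) :
  exists (M : finType) (init : st T -> M) (step : M -> 'I_n -> M)
         (read : M -> st T),
    forall (s : st T) (w : seq 'I_n),
      read (foldl step (init s) w) = state_after T (build gs w) s.
Proof.
exists ({ffun st T -> st T} * st T)%type,
  (fun s => (state_fun T (t_id S 1), s)),
  (fun m i => (fill_state_fun (gs i) m.1, m.2)),
  (fun m : {ffun st T -> st T} * st T => m.1 m.2).
move=> s w.
rewrite (foldl_pair_const (fun f i => fill_state_fun (gs i) f)) /=.
by rewrite state_fun_foldl_fill ffunE.
Qed.
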